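(* There exists a family of broadcast protocols $(P_n)_{n}$, $P_n=(Q_n,I_n,M_n,\Delta_n)$, with target sets $F_n\subseteq Q_n$, such that for every $n$: there exists a reconfigurable execution of $P_n$ covering $F_n$ with $3$ nodes; and every lossy execution of $P_n$ covering $F_n$ has $\Omega(n)$ nodes.
   Context: A broadcast protocol is a tuple $P=(Q,I,M,\Delta)$ where $Q$ is a finite set of states, $I\subseteq Q$ initial states, $M$ a finite message alphabet and $\Delta\subseteq Q\times\{!!m,\ ??m \mid m\in M\}\times Q$ ($!!m$ = broadcast, $??m$ = reception); protocols are complete for receptions (for every $q$, $m$ there is $q'$ with $(q,??m,q')\in\Delta$). A configuration is a finite undirected graph $\gamma=(V,E,L)$, $E$ symmetric irreflexive, $L:V\to Q$; initial if $L(V)\subseteq I$. A reconfigurable step from $(V,E,L)$ to $(V,E',L')$ ($E'$ arbitrary): some node $v$ and $m$ with $(L(v),!!m,L'(v))\in\Delta$, every neighbour $v'$ of $v$ in $E$ satisfies $(L(v'),??m,L'(v'))\in\Delta$, every other node keeps its label. A lossy step from $(V,E,L)$ to $(V,E,L')$ (edges fixed): some $v$, $m$ with $(L(v),!!m,L'(v))\in\Delta$ and either all other nodes keep their labels (lost broadcast) or as in the reconfigurable step with $E$ (successful broadcast). A reconfigurable (resp. lossy) execution is a sequence $\gamma_0,\dots,\gamma_r$ with $\gamma_0$ initial and consecutive reconfigurable (resp. lossy) steps; its number of nodes is $|V|$, and it covers $F$ if some node of $\gamma_r$ has a label in $F$. *)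

From mathcomp Require Import all_boot.
Set Implicit Arguments. Unset Strict Implicit. Unset Printing Implicit Defensive.

Inductive action (M : Type) : Type :=
| Bcast of M
| Recv of M.

Record protocol := Protocol {
  pstate : finType;
  pmsg : finType;
  pinit : {set pstate};
  pdelta : pstate -> action pmsg -> pstate -> bool
}.

Definition complete_recv (P : protocol) : Prop :=
  forall (q : pstate P) (m : pmsg P), exists q', pdelta q (Recv m) q'.

Record config (P : protocol) (V : finType) := Config {
  cedge : rel V;
  clab : V -> pstate P
}.

Definition wf_config P V (g : config P V) : Prop :=
  (forall x y, cedge g x y = cedge g y x) /\ (forall x, cedge g x x = false).

Definition initial_config P V (g : config P V) : Prop :=
  forall v, clab g v \in pinit P.

Definition bcast_success P V (g g' : config P V) (v : V) (m : pmsg P) : Prop :=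
  pdelta (clab g v) (Bcast m) (clab g' v) /\
  (forall v', cedge g v v' -> pdelta (clab g v') (Recv m) (clab g' v')) /\
  (forall v', v' != v -> ~~ cedge g v v' -> clab g' v' = clab g v').

Definition bcast_lost P V (g g' : config P V) (v : V) (m : pmsg P) : Prop :=
  pdelta (clab g v) (Bcast m) (clab g' v) /\
  (forall v', v' != v -> clab g' v' = clab g v').

(* Reconfigurable step: E' arbitrary. *)
Definition reconf_step P V (g g' : config P V) : Prop :=
  exists v m, bcast_success g g' v m.

Definition lossy_step P V (g g' : config P V) : Prop :=
  (forall x y, cedge g' x y = cedge g x y) /\
  exists v m, bcast_lost g g' v m \/ bcast_success g g' v m.

Definition execution P V (step : config P V -> config P V -> Prop)
  (gam : nat -> config P V) (r : nat) : Prop :=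
  (forall i, i <= r -> wf_config (gam i)) /\
  initial_config (gam 0) /\
  (forall i, i < r -> step (gam i) (gam i.+1)).

Definition reconf_execution P V := @execution P V (@reconf_step P V).
Definition lossy_execution P V := @execution P V (@lossy_step P V).

Definition covers P V (gam : nat -> config P V) (r : nat) (F : {set pstate P}) :=
  exists v, clab (gam r) v \in F.

From HB Require Import structures.
From mathcomp Require Import all_boot zify.
Set Implicit Arguments. Unset Strict Implicit. Unset Printing Implicit Defensive.

(* A counter node climbs from level 0 to level n, one level per Grant it
   receives, and Grant is broadcast only by a helper that has been asked.  In a
   lossy execution the edges are fixed; a successful Grant moves every
   neighbour of the granting helper out of the helper states (to Dead, or to a
   counter state), and helper states are never re-entered.  The granting helper
   is then spent for ever: nobody can broadcast the Release that would revive
   it.  Hence every level is bounded by the number of spent helpers, hence by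
   the number of nodes.  With reconfiguration, two helpers alternately serve the
   counter and release each other, so three nodes reach level n. *)

Lemma execution_invariant (P : protocol) (V : finType)
    (step : config P V -> config P V -> Prop) (I : config P V -> Prop)
    (gam : nat -> config P V) (r : nat) :
  (forall g, initial_config g -> I g) ->
  (forall g g', wf_config g -> step g g' -> I g -> I g') ->
  execution step gam r -> I (gam r).
Proof.
move=> I0 Istep [wf [init steps]].
suff: forall t, t <= r -> I (gam t) by apply.
elim=> [_ | t IH lt_tr]; first exact: I0 init.
exact: Istep (wf _ (ltnW lt_tr)) (steps _ lt_tr) (IH (ltnW lt_tr)).
Qed.

Lemma lossy_step_node (P : protocol) (V : finType) (g g' : config P V) (w : V) :
  lossy_step g g' ->
  [\/ clab g' w = clab g w,
       exists m, pdelta (clab g w) (Bcast m) (clab g' w)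
     | exists v m, [/\ cedge g v w, bcast_success g g' v m
                     & pdelta (clab g w) (Recv m) (clab g' w)]].
Proof.
case=> _ [v [m bcast_vm]].
have bv : pdelta (clab g v) (Bcast m) (clab g' v) by case: bcast_vm => -[].
case: (eqVneq w v) => [-> | wv]; first by apply: Or32; exists m.
case: bcast_vm => [[_ others] | succ]; first by apply: Or31; apply: others.
have [_ [recvs others]] := succ.
have [e | ne] := boolP (cedge g v w).
  by apply: Or33; exists v, m; split=> //; apply: recvs.
by apply: Or31; apply: others.
Qed.

Definition link (T : eqType) (a b : T) : rel T :=
  fun x y => (x == a) && (y == b) || (x == b) && (y == a).

Lemma link_wf (P : protocol) (V : finType) (a b : V) (lab : V -> pstate P) :
  a != b -> wf_config (Config (link a b) lab).
Proof.
move=> ab; split=> [x y | x] /=; first by rewrite /link orbC andbC (andbC (x == a)).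
rewrite /link andbC orbb; apply/negbTE/andP => -[/eqP xb /eqP xa].
by rewrite -xa -xb eqxx in ab.
Qed.

Inductive msg := Req | Grant | Release.

Definition msg_code (m : msg) : option bool :=
  match m with Req => None | Grant => Some true | Release => Some false end.

Definition msg_decode (c : option bool) : msg :=
  match c with None => Req | Some true => Grant | Some false => Release end.

Lemma msg_codeK : cancel msg_code msg_decode. Proof. by case. Qed.

HB.instance Definition _ := Finite.copy msg (can_type msg_codeK).

Inductive state (n : nat) :=
  Count of 'I_n.+1 | Wait of 'I_n.+1 | Idle | Asked | Granted | Released | Dead.
Arguments Idle {n}. Arguments Asked {n}. Arguments Granted {n}.
Arguments Released {n}. Arguments Dead {n}.

Definition state_code n (q : state n) : 'I_n.+1 + 'I_n.+1 + 'I_5 :=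
  match q with
  | Count i => inl (inl i)
  | Wait i => inl (inr i)
  | Idle => inr (@Ordinal 5 0 isT)
  | Asked => inr (@Ordinal 5 1 isT)
  | Granted => inr (@Ordinal 5 2 isT)
  | Released => inr (@Ordinal 5 3 isT)
  | Dead => inr (@Ordinal 5 4 isT)
  end.

Definition state_decode n (c : 'I_n.+1 + 'I_n.+1 + 'I_5) : option (state n) :=
  match c with
  | inl (inl i) => Some (Count i)
  | inl (inr i) => Some (Wait i)
  | inr k =>
      match val k with
      | 0 => Some Idle | 1 => Some Asked | 2 => Some Granted
      | 3 => Some Released | _ => Some Dead
      end
  end.

Lemma state_codeK n : pcancel (@state_code n) (@state_decode n). Proof. by case. Qed.

HB.instance Definition _ n := Finite.copy (state n) (pcan_type (@state_codeK n)).

Section CounterProtocol.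
Variable n : nat.
Implicit Types (q : state n) (m : msg).

Definition recv q m : state n :=
  match q, m with
  | Wait i, Grant => Count (inord i.+1) (* wraps to 0 at i = n: harmless *)
  | Idle, Req => Asked
  | Idle, Release | Released, Release => Idle
  | _, _ => Dead
  end.

Definition bcast q m : option (state n) :=
  match q, m with
  | Count i, Req => Some (Wait i)
  | Asked, Grant => Some Granted
  | Granted, Release => Some Released
  | _, _ => None
  end.

Definition delta q (a : action msg) q' : bool :=
  match a with Bcast m => bcast q m == Some q' | Recv m => q' == recv q m end.

Definition counter_prot : protocol := @Protocol (state n) msg [set Count ord0; Idle] delta.

Definition counter_target : {set state n} := [set Count ord_max].

Lemma counter_prot_complete : complete_recv counter_prot.
Proof. by move=> q m; exists (recv q m); apply/eqP. Qed.

Definition alive q : bool :=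
  match q with Idle | Asked | Granted | Released => true | _ => false end.

Definition exhausted q : bool :=
  match q with Granted | Released | Dead => true | _ => false end.

Definition level q : nat := match q with Count i | Wait i => i | _ => 0 end.

Lemma alive_delta q a q' : delta q a q' -> alive q' -> alive q.
Proof. by case: a => m /= /eqP; [|move->]; case: q; case: m => // > [<-]. Qed.

Lemma exhausted_bcast q m q' : bcast q m = Some q' -> exhausted q -> exhausted q'.
Proof. by case: q; case: m => // > [<-]. Qed.

Lemma exhausted_recv q m : m != Release -> exhausted q -> exhausted (recv q m).
Proof. by case: q; case: m. Qed.

Lemma bcast_release_alive q q' : bcast q Release = Some q' -> alive q.
Proof. by case: q. Qed.

Lemma bcast_grant q q' : bcast q Grant = Some q' -> q = Asked /\ q' = Granted.
Proof. by case: q => // [[<-]]. Qed.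

Lemma recv_grant_dead q : ~~ alive (recv q Grant).
Proof. by case: q. Qed.

Lemma level_bcast q m q' : bcast q m = Some q' -> level q' = level q.
Proof. by case: q; case: m => // > [<-]. Qed.

Lemma level_recv q m : level (recv q m) <= level q + (m == Grant).
Proof.
case: q => //; case: m => // i; rewrite /= addn1 /inord val_insubd.
by case: ifP.
Qed.

End CounterProtocol.

Section LossyLowerBound.
Variables (n : nat) (V : finType).
Implicit Types (g : config (counter_prot n) V) (v w : V).

Definition spent g v : bool :=
  exhausted (clab g v) && [forall w, cedge g w v ==> ~~ alive (clab g w)].

Definition nspent g : nat := #|[set v | spent g v]|.

Lemma alive_lossy_step g g' w : lossy_step g g' -> alive (clab g' w) -> alive (clab g w).
Proof.
by case/(lossy_step_node w) => [-> // | [m] | [v [m [_ _]]]]; apply: alive_delta.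
Qed.

Lemma spent_lossy_step g g' v : lossy_step g g' -> spent g v -> spent g' v.
Proof.
move=> st /andP[ex_v /forallP dead_nbrs].
have dead_nbrs' : [forall w, cedge g' w v ==> ~~ alive (clab g' w)].
  apply/forallP => w; rewrite st.1; apply/implyP => /(implyP (dead_nbrs w)).
  by apply: contra; apply: alive_lossy_step.
rewrite /spent dead_nbrs' andbT.
case/(lossy_step_node v): st => [-> // | [m /eqP /exhausted_bcast /(_ ex_v)] // |].
move=> [u [m [e_uv [bu _] /eqP ->]]].
apply: exhausted_recv ex_v; apply: contraNneq (implyP (dead_nbrs u) e_uv) => m_rel.
by move: bu; rewrite m_rel /= => /eqP /bcast_release_alive.
Qed.

Lemma nspent_lossy_step g g' : lossy_step g g' -> nspent g <= nspent g'.
Proof.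
move=> st; apply/subset_leq_card/subsetP => v; rewrite !inE.
exact: spent_lossy_step.
Qed.

Lemma nspent_grant g g' v :
  wf_config g -> lossy_step g g' -> bcast_success g g' v Grant -> nspent g < nspent g'.
Proof.
move=> [sym _] st [/eqP /bcast_grant [gv g'v] [recvs _]].
apply/proper_card/properP; split.
  by apply/subsetP => u; rewrite !inE; apply: spent_lossy_step.
exists v; rewrite !inE /spent ?gv ?g'v //=.
apply/forallP => w; apply/implyP; rewrite st.1 sym => /recvs /eqP ->.
exact: recv_grant_dead.
Qed.

Definition level_le_nspent g : Prop := forall x, level (clab g x) <= nspent g.

Lemma level_le_nspent_step g g' :
  wf_config g -> lossy_step g g' -> level_le_nspent g -> level_le_nspent g'.
Proof.
move=> wf st le_g x; have mono := nspent_lossy_step st.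
case/(lossy_step_node x): (st) => [-> | [m /eqP /level_bcast ->] |];
  try exact: leq_trans (le_g x) mono.
move=> [v [m [_ succ /eqP ->]]].
apply: leq_trans (level_recv _ m) _.
have [m_grant | _] := eqVneq m Grant; last by rewrite addn0; apply: leq_trans (le_g x) mono.
rewrite m_grant in succ; rewrite addn1.
exact: leq_ltn_trans (le_g x) (nspent_grant wf st succ).
Qed.

Lemma lossy_level_le_card (gam : nat -> config (counter_prot n) V) r x :
  lossy_execution gam r -> level (clab (gam r) x) <= #|V|.
Proof.
move=> exec.
have inv : level_le_nspent (gam r).
  apply: (execution_invariant (I := @level_le_nspent) _ _ exec) => [g init y | g g'].
    by move: (init y); rewrite !inE => /orP[] /eqP ->.
  exact: level_le_nspent_step.
exact: leq_trans (inv x) (max_card _).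
Qed.

End LossyLowerBound.

Section ReconfExecution.
Variable n : nat.

(* Node [None] is the counter and [Some b] a helper.  In round [j] the helper
   [Some (odd j)] serves the counter; phase [s] is about to broadcast
   Req (s = 0), Grant (s = 1) or Release (s = 2). *)
Definition round_lab (j s : nat) (x : option bool) : state n :=
  match x, s with
  | None, 0 => Count (inord j)
  | None, 1 => Wait (inord j)
  | None, _ => Count (inord j.+1)
  | Some b, _ =>
      if b != odd j then (if j == 0 then Idle else Released)
      else match s with 0 => Idle | 1 => Asked | _ => Granted end
  end.

Definition round_cfg (j s : nat) : config (counter_prot n) (option bool) :=
  @Config (counter_prot n) _
    (if s == 2 then link (Some true) (Some false) else link None (Some (odd j)))
    (round_lab j s).

Lemma round_cfg_wf j s : wf_config (round_cfg j s).
Proof. by rewrite /round_cfg; case: (s == 2); apply: link_wf. Qed.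

Lemma round_req_step j : reconf_step (round_cfg j 0) (round_cfg j 1).
Proof.
exists None, Req; split; last split; rewrite /= /link //.
all: by case=> [b|] //=; case: b; case: (odd j).
Qed.

Lemma round_grant_step j : j < n -> reconf_step (round_cfg j 1) (round_cfg j 2).
Proof.
move=> lt_jn; exists (Some (odd j)), Grant.
split; last split; rewrite /= /link ?eqxx //.
- by move=> [b|] _ //=; rewrite (inordK (ltnW lt_jn)).
- by move=> [b|] //=; case: b; case: (odd j).
Qed.

Lemma round_release_step j : reconf_step (round_cfg j 2) (round_cfg j.+1 0).
Proof.
exists (Some (odd j)), Release; split; last split; rewrite /= /link.
- by case: (odd j).
- by move=> [[]|] /=; case: (odd j); case: (j == 0).
- by move=> [[]|] /=; case: (odd j).
Qed.

Definition round_exec (t : nat) : config (counter_prot n) (option bool) :=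
  round_cfg (t %/ 3) (t %% 3).

Lemma round_exec_step t : t < 3 * n -> reconf_step (round_exec t) (round_exec t.+1).
Proof.
move=> lt_t; rewrite /round_exec.
have : t %% 3 < 3 by rewrite ltn_mod.
case s: (t %% 3) => [|[|[|//]]] _.
- have -> : t.+1 %/ 3 = t %/ 3 by lia.
  have -> : t.+1 %% 3 = 1 by lia.
  exact: round_req_step.
- have -> : t.+1 %/ 3 = t %/ 3 by lia.
  have -> : t.+1 %% 3 = 2 by lia.
  apply: round_grant_step; lia.
- have -> : t.+1 %/ 3 = (t %/ 3).+1 by lia.
  have -> : t.+1 %% 3 = 0 by lia.
  exact: round_release_step.
Qed.

Lemma round_execution : reconf_execution round_exec (3 * n).
Proof.
split; first by move=> t _; apply: round_cfg_wf.
split; last exact: round_exec_step.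
have inord0 : inord 0 = ord0 :> 'I_n.+1 by apply: val_inj; rewrite /= inordK.
by case=> [[]|]; rewrite /= ?div0n ?inord0 !inE eqxx ?orbT.
Qed.

Lemma round_exec_covers : covers round_exec (3 * n) (counter_target n).
Proof.
exists None; rewrite /round_exec mulKn // modnMr /= inE.
by apply/eqP; congr Count; apply: val_inj; rewrite /= inordK.
Qed.

End ReconfExecution.

Theorem theorem4p1 :
  exists (P : nat -> protocol) (F : forall n, {set pstate (P n)}),
    (forall n, complete_recv (P n)) /\
    (forall n, exists (V : finType) (gam : nat -> config (P n) V) (r : nat),
        #|V| = 3 /\ reconf_execution gam r /\ covers gam r (F n)) /\
    (* Omega(n): exist c >= 1 and N with c * (#nodes) >= n for all n >= N *)
    (exists c N : nat, 0 < c /\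
      forall n, N <= n ->
      forall (V : finType) (gam : nat -> config (P n) V) (r : nat),
        lossy_execution gam r -> covers gam r (F n) -> n <= c * #|V|).
Proof.
exists counter_prot, counter_target; split; first exact: counter_prot_complete.
split.
  move=> n; exists _, (round_exec n), (3 * n); split; first by rewrite card_option card_bool.
  exact: conj (round_execution n) (round_exec_covers n).
exists 1, 0; split=> // n _ V gam r exec [v].
rewrite inE mul1n => /eqP reached.
by have := lossy_level_le_card v exec; rewrite reached.
Qed.
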